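(* For $s\in[0,1]$ let $|\alpha^n_s\rangle$ be the (unique) ground state of $H^n_s=(1-s)\sum_{k=1}^n|-\rangle\langle-|_k+s\sum_{k=1}^n|1\rangle\langle1|_k$; it has the form $(\cos\varphi_s|0\rangle+\sin\varphi_s|1\rangle)^{\otimes n}=(\cos\xi_s|+\rangle+\sin\xi_s|-\rangle)^{\otimes n}$ with $\varphi_s\in[0,\pi/4]$, $\xi_s=\pi/4-\varphi_s$. For every real $\vartheta\ge n/2$ and every $s\in[0,1]$, $$\sum_{j:\,h(j)\ge\vartheta}\Big(|\langle j|\alpha^n_s\rangle|^2+|\langle j_+|\alpha^n_s\rangle|^2\Big)\le2\exp\!\Big(-\frac{2(\vartheta-n/2)^2}{3n}\Big).$$
   Context: On $n$ qubits with computational basis $|j\rangle$, $j\in\{0,\dots,2^n-1\}$: $h(j)$ is the Hamming weight of $j$ and $|j_+\rangle=\mathsf H^{\otimes n}|j\rangle$ with $\mathsf H$ the Hadamard gate; subscript $k$ means the operator acts on qubit $k$. *)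

From Stdlib Require Import Reals List Arith Bool.
Import ListNotations.
Open Scope R_scope.

Definition rsum (N : nat) (f : nat -> R) : R :=
  fold_right Rplus 0 (map f (seq 0 N)).
Definition rprod (N : nat) (f : nat -> R) : R :=
  fold_right Rmult 1 (map f (seq 0 N)).

(* bit k of the basis label j: the computational-basis value of qubit k *)
Definition bit (j k : nat) : bool := Nat.testbit j k.

Definition hw (n j : nat) : nat :=
  length (filter (fun k => bit j k) (seq 0 n)).

(* matrix entry <i| A_k |j> of a single-qubit operator A acting on qubit k
   (identity on the other n-1 qubits); A a b = <a|A|b> *)
Definition op_on (n k : nat) (A : bool -> bool -> R) (i j : nat) : R :=
  A (bit i k) (bit j k) *
  rprod n (fun l => if Nat.eqb l k then 1
                    else if Bool.eqb (bit i l) (bit j l) then 1 else 0).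

(* |-><-| = 1/2 [[1,-1],[-1,1]] and |1><1| *)
Definition Pminus (a b : bool) : R := if Bool.eqb a b then 1/2 else -(1/2).
Definition P1 (a b : bool) : R := if a && b then 1 else 0.

Definition Ham (n : nat) (s : R) (i j : nat) : R :=
  (1 - s) * rsum n (fun k => op_on n k Pminus i j)
  + s * rsum n (fun k => op_on n k P1 i j).

(* a complex state vector on n qubits, as real part re and imaginary part im,
   components indexed by j in 0..2^n-1 *)
Definition norm2 (n : nat) (re im : nat -> R) : R :=
  rsum (2 ^ n) (fun j => re j ^ 2 + im j ^ 2).

(* energy <v|H|v> for v = re + i im and H real symmetric
   (the imaginary part of <v|H|v> vanishes) *)
Definition energy (n : nat) (H : nat -> nat -> R) (re im : nat -> R) : R :=
  rsum (2 ^ n) (fun i => rsum (2 ^ n) (fun j =>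
      H i j * (re i * re j + im i * im j))).

Definition IsGroundState (n : nat) (H : nat -> nat -> R) (re im : nat -> R) : Prop :=
  norm2 n re im = 1 /\
  forall re' im' : nat -> R, norm2 n re' im' = 1 ->
    energy n H re im <= energy n H re' im'.

(* matrix entry <j| H^{(x)n} |i> = prod_k (-1)^{j_k i_k} / sqrt 2 *)
Definition hadn (n j i : nat) : R :=
  rprod n (fun k => (if bit j k && bit i k then -1 else 1) / sqrt 2).

Definition amp2_comp (re im : nat -> R) (j : nat) : R := re j ^ 2 + im j ^ 2.

(* |<j_+|v>|^2, with |j_+> = H^{(x)n}|j> (real), so <j_+|v> = sum_i H_{ji} v_i *)
Definition amp2_had (n : nat) (re im : nat -> R) (j : nat) : R :=
  (rsum (2 ^ n) (fun i => hadn n j i * re i)) ^ 2 +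
  (rsum (2 ^ n) (fun i => hadn n j i * im i)) ^ 2.

(* The Hamiltonian H^n_s is a sum of commuting single-qubit terms, so its
   quadratic form splits qubit by qubit.  Diagonalising the 2x2 qubit block
   h_s = (1-s)|-><-| + s|1><1| gives, for every vector x,
       <x|H^n_s|x> = n*lam*|x|^2 + kap * sum_k defect_k(x),
   where lam is the lowest eigenvalue of h_s, kap > 0, and defect_k(x) >= 0
   measures how far x is from satisfying x(j with bit k set) = r * x(j)
   with r = tan(phi_s).  The product state with amplitudes ~ r^{h(j)} has no
   defect, so every ground state has zero defect and hence amplitudes
   r^{h(j)} * x(0).  For such a state both |<j|a>|^2 and |<j_+|a>|^2 are
   product Bernoulli weights p^{h(j)} (1-p)^{n-h(j)} with p <= 1/2, and a
   Chernoff bound on the upper tail of a Binomial(n,p) with p <= 1/2 gives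
   exp(-2(theta-n/2)^2/(3n)) for each of the two sums. *)

From Pilot Require Import Defs.
From Stdlib Require Import Reals List Arith Bool Lia Lra.
Open Scope R_scope.

Lemma fold_right_Rplus_init (l : list R) (a : R) :
  fold_right Rplus a l = fold_right Rplus 0 l + a.
Proof. induction l as [|x l IH]; simpl; [lra|rewrite IH; lra]. Qed.

Lemma fold_right_Rmult_init (l : list R) (a : R) :
  fold_right Rmult a l = fold_right Rmult 1 l * a.
Proof. induction l as [|x l IH]; simpl; [lra|rewrite IH; ring]. Qed.

Lemma rsum_S (N : nat) (f : nat -> R) : rsum (S N) f = rsum N f + f N.
Proof.
  unfold rsum. rewrite seq_S, map_app, fold_right_app. simpl.
  rewrite fold_right_Rplus_init. lra.
Qed.

Lemma rprod_S (N : nat) (f : nat -> R) : rprod (S N) f = rprod N f * f N.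
Proof.
  unfold rprod. rewrite seq_S, map_app, fold_right_app. simpl.
  rewrite fold_right_Rmult_init. ring.
Qed.

Lemma rsum_ext (N : nat) (f g : nat -> R) :
  (forall i, (i < N)%nat -> f i = g i) -> rsum N f = rsum N g.
Proof. induction N; intros H; [reflexivity|]. rewrite !rsum_S, IHN, H; auto. Qed.

Lemma rprod_ext (N : nat) (f g : nat -> R) :
  (forall i, (i < N)%nat -> f i = g i) -> rprod N f = rprod N g.
Proof. induction N; intros H; [reflexivity|]. rewrite !rprod_S, IHN, H; auto. Qed.

Lemma rsum_plus (N : nat) (f g : nat -> R) :
  rsum N (fun i => f i + g i) = rsum N f + rsum N g.
Proof. induction N; [cbn; lra|]. rewrite !rsum_S, IHN. lra. Qed.

Lemma rsum_scal (N : nat) (c : R) (f : nat -> R) :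
  rsum N (fun i => c * f i) = c * rsum N f.
Proof. induction N; [cbn; lra|]. rewrite !rsum_S, IHN. lra. Qed.

Lemma rsum_const (N : nat) (c : R) : rsum N (fun _ => c) = INR N * c.
Proof. induction N; [cbn; ring|]. rewrite rsum_S, IHN, S_INR. ring. Qed.

Lemma rsum_zero (N : nat) : rsum N (fun _ => 0) = 0.
Proof. rewrite rsum_const. ring. Qed.

Lemma rsum_le (N : nat) (f g : nat -> R) :
  (forall i, (i < N)%nat -> f i <= g i) -> rsum N f <= rsum N g.
Proof.
  induction N; intros H; [cbn; lra|]. rewrite !rsum_S.
  apply Rplus_le_compat; auto.
Qed.

Lemma rsum_nonneg (N : nat) (f : nat -> R) :
  (forall i, (i < N)%nat -> 0 <= f i) -> 0 <= rsum N f.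
Proof. intros H. rewrite <- (rsum_zero N). apply rsum_le. exact H. Qed.

Lemma rsum_term_le (N : nat) (f : nat -> R) (i : nat) :
  (forall i, (i < N)%nat -> 0 <= f i) -> (i < N)%nat -> f i <= rsum N f.
Proof.
  induction N; intros H Hi; [lia|]. rewrite rsum_S.
  destruct (Nat.eq_dec i N) as [->|Hne].
  - pose proof (rsum_nonneg N f ltac:(auto)). lra.
  - pose proof (IHN ltac:(auto) ltac:(lia)). pose proof (H N ltac:(lia)). lra.
Qed.

Lemma rsum_add (a b : nat) (f : nat -> R) :
  rsum (a + b) f = rsum a f + rsum b (fun j => f (a + j)%nat).
Proof.
  induction b; [rewrite Nat.add_0_r; cbn; lra|].
  rewrite Nat.add_succ_r, !rsum_S, IHb. lra.
Qed.

Lemma rsum_swap (N M : nat) (f : nat -> nat -> R) :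
  rsum N (fun i => rsum M (fun k => f i k)) = rsum M (fun k => rsum N (fun i => f i k)).
Proof.
  induction N; [cbn; rewrite rsum_zero; reflexivity|].
  rewrite rsum_S, IHN, <- rsum_plus. apply rsum_ext; intros. rewrite rsum_S; reflexivity.
Qed.

Lemma rsum_delta (N j : nat) (g : nat -> R) : (j < N)%nat ->
  rsum N (fun i => if (i =? j)%nat then g i else 0) = g j.
Proof.
  induction N; intros H; [lia|]. rewrite rsum_S.
  destruct (Nat.eqb_spec N j) as [->|Hne].
  - rewrite (rsum_ext _ _ (fun _ => 0)), rsum_zero; [lra|].
    intros i Hi. destruct (Nat.eqb_spec i j); [lia|reflexivity].
  - rewrite IHN by lia. lra.
Qed.

Lemma rprod_mult (N : nat) (f g : nat -> R) :
  rprod N (fun i => f i * g i) = rprod N f * rprod N g.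
Proof. induction N; [cbn; lra|]. rewrite !rprod_S, IHN. ring. Qed.

Lemma rprod_const (N : nat) (c : R) : rprod N (fun _ => c) = c ^ N.
Proof. induction N; [reflexivity|]. rewrite rprod_S, IHN. simpl. ring. Qed.

Lemma rprod_nonneg (N : nat) (f : nat -> R) :
  (forall i, (i < N)%nat -> 0 <= f i) -> 0 <= rprod N f.
Proof. induction N; intros H; [cbn; lra|]. rewrite rprod_S. apply Rmult_le_pos; auto. Qed.

Lemma rprod_zero (N i : nat) (f : nat -> R) : (i < N)%nat -> f i = 0 -> rprod N f = 0.
Proof.
  induction N; intros Hi Hf; [lia|]. rewrite rprod_S.
  destruct (Nat.eq_dec i N) as [->|Hne]; [rewrite Hf; ring|].
  rewrite IHN by (auto; lia). ring.
Qed.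

Lemma rprod_sq (N : nat) (f : nat -> R) : rprod N f ^ 2 = rprod N (fun i => f i ^ 2).
Proof. induction N; [cbn; lra|]. rewrite !rprod_S, <- IHN. ring. Qed.

Lemma bit_high (j n m : nat) : (j < 2 ^ n)%nat -> (n <= m)%nat -> bit j m = false.
Proof.
  intros Hj Hm. unfold bit. destruct (Nat.eq_dec j 0) as [->|Hj0].
  - apply Nat.bits_0.
  - apply Nat.bits_above_log2. apply Nat.log2_lt_pow2 in Hj; lia.
Qed.

Lemma bit_add_pow (i m l : nat) : bit i m = false ->
  bit (i + 2 ^ m) l = ((l =? m)%nat || bit i l).
Proof.
  unfold bit; intros H.
  assert (Hl : Nat.land i (2 ^ m) = 0%nat).
  { apply Nat.bits_inj_0. intro k. rewrite Nat.land_spec, Nat.pow2_bits_eqb.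
    destruct (Nat.eqb_spec m k); subst; [rewrite H|]; auto with bool. }
  rewrite Nat.add_nocarry_lxor by exact Hl.
  rewrite Nat.lxor_spec, Nat.pow2_bits_eqb.
  destruct (Nat.eqb_spec l m); destruct (Nat.eqb_spec m l); subst; try lia.
  - rewrite H; reflexivity.
  - simpl. apply xorb_false_r.
Qed.

Lemma bit_shift (j m l : nat) : (j < 2 ^ m)%nat ->
  bit (j + 2 ^ m) l = ((l =? m)%nat || bit j l).
Proof. intros Hj. apply bit_add_pow, (bit_high j m m Hj); lia. Qed.

Lemma bits_eq (i j n : nat) : (i < 2 ^ n)%nat -> (j < 2 ^ n)%nat ->
  (forall l, (l < n)%nat -> bit i l = bit j l) -> i = j.
Proof.
  intros Hi Hj H. apply Nat.bits_inj. intro l. fold (bit i l) (bit j l).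
  destruct (Nat.lt_ge_cases l n); [apply H; auto|].
  rewrite (bit_high i n l), (bit_high j n l); auto.
Qed.

Lemma bits_differ (i j n : nat) : (i < 2 ^ n)%nat -> (j < 2 ^ n)%nat -> i <> j ->
  exists l, (l < n)%nat /\ bit i l <> bit j l.
Proof.
  intros Hi Hj Hij.
  destruct (existsb (fun l => negb (Bool.eqb (bit i l) (bit j l))) (seq 0 n)) eqn:E.
  - apply existsb_exists in E as [l [Hl Hd]]. apply in_seq in Hl.
    exists l. split; [lia|]. intros Heq. rewrite Heq, eqb_reflx in Hd. discriminate.
  - exfalso. apply Hij, (bits_eq i j n Hi Hj). intros l Hl.
    apply Bool.eqb_prop. destruct (Bool.eqb (bit i l) (bit j l)) eqn:Eb; [reflexivity|].
    rewrite <- E. apply existsb_exists.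
    exists l. split; [apply in_seq; lia|]. rewrite Eb. reflexivity.
Qed.

Lemma hw_S (n j : nat) : hw (S n) j = (hw n j + (if bit j n then 1 else 0))%nat.
Proof.
  unfold hw. rewrite seq_S, filter_app, length_app. simpl.
  destruct (bit j n); reflexivity.
Qed.

Lemma hw_le (n j : nat) : (hw n j <= n)%nat.
Proof. induction n; [cbn; lia|]. rewrite hw_S. destruct (bit j n); lia. Qed.

Lemma hw_zero (n : nat) : hw n 0 = 0%nat.
Proof. induction n; [reflexivity|]. rewrite hw_S, IHn. unfold bit. rewrite Nat.bits_0. reflexivity. Qed.

Lemma hw_add_pow (n i m : nat) : bit i m = false ->
  hw n (i + 2 ^ m) = (hw n i + (if (m <? n)%nat then 1 else 0))%nat.
Proof.
  intros Hb. induction n; [reflexivity|].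
  rewrite !hw_S, IHn, bit_add_pow by exact Hb.
  destruct (Nat.eqb_spec n m) as [->|Hne].
  - rewrite Hb. simpl. rewrite Nat.ltb_irrefl, (proj2 (Nat.ltb_lt m (S m))) by lia. lia.
  - simpl. destruct (Nat.ltb_spec m n), (Nat.ltb_spec m (S n)); lia.
Qed.

Lemma hw_set_bit (n i m : nat) : bit i m = false -> (m < n)%nat ->
  hw n (i + 2 ^ m) = S (hw n i).
Proof. intros Hb Hm. rewrite hw_add_pow, (proj2 (Nat.ltb_lt m n)) by assumption. lia. Qed.

Lemma set_bit_lt (n i k : nat) : (i < 2 ^ n)%nat -> (k < n)%nat -> bit i k = false ->
  (i + 2 ^ k < 2 ^ n)%nat.
Proof.
  intros Hi Hk Bi. pose proof (Nat.pow_nonzero 2 k ltac:(lia)).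
  apply Nat.log2_lt_pow2; [lia|].
  destruct (Nat.lt_ge_cases (Nat.log2 (i + 2 ^ k)) n) as [|Hge]; [assumption|exfalso].
  pose proof (Nat.bit_log2 (i + 2 ^ k) ltac:(lia)) as Hb.
  fold (bit (i + 2 ^ k) (Nat.log2 (i + 2 ^ k))) in Hb.
  rewrite bit_add_pow, (bit_high i n) in Hb by assumption.
  destruct (Nat.eqb_spec (Nat.log2 (i + 2 ^ k)) k); [lia|discriminate].
Qed.

Lemma pow_hw (n j : nat) (c : R) :
  c ^ hw n j = rprod n (fun k => if bit j k then c else 1).
Proof.
  induction n; [reflexivity|].
  rewrite hw_S, rprod_S, <- IHn, pow_add. destruct (bit j n); simpl; ring.
Qed.

(** * Sums over the hypercube {0,1}^n *)

Lemma rsum_pow_S (m : nat) (f : nat -> R) :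
  rsum (2 ^ S m) f = rsum (2 ^ m) f + rsum (2 ^ m) (fun j => f (j + 2 ^ m)%nat).
Proof.
  replace (2 ^ S m)%nat with (2 ^ m + 2 ^ m)%nat by (simpl; lia).
  rewrite rsum_add. f_equal. apply rsum_ext; intros. f_equal; lia.
Qed.

Lemma rsum_pairs (n k : nat) (f : nat -> R) : (k < n)%nat ->
  rsum (2 ^ n) f =
  rsum (2 ^ n) (fun j => if bit j k then 0 else f j + f (j + 2 ^ k)%nat).
Proof.
  revert f; induction n; intros f Hk; [lia|].
  rewrite !rsum_pow_S.
  destruct (Nat.eq_dec k n) as [->|Hne].
  - rewrite (rsum_ext (2 ^ n) (fun j => if bit j n then 0 else _)
               (fun j => f j + f (j + 2 ^ n)%nat)).
    2:{ intros j Hj. rewrite (bit_high j n n); auto. }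
    rewrite (rsum_ext (2 ^ n) (fun j => if bit (j + 2 ^ n) n then 0 else _) (fun _ => 0)).
    2:{ intros j Hj. rewrite bit_shift, Nat.eqb_refl; auto. }
    rewrite rsum_zero, rsum_plus. lra.
  - rewrite (IHn f), (IHn (fun j => f (j + 2 ^ n)%nat)) by lia. f_equal.
    apply rsum_ext; intros j Hj. rewrite bit_shift by auto.
    destruct (Nat.eqb_spec k n); [lia|]. simpl.
    destruct (bit j k); [reflexivity|]. do 2 f_equal. lia.
Qed.

Lemma rsum_rprod (n : nat) (g : nat -> bool -> R) :
  rsum (2 ^ n) (fun j => rprod n (fun k => g k (bit j k))) =
  rprod n (fun k => g k false + g k true).
Proof.
  induction n; [cbn; lra|].
  rewrite rsum_pow_S, rprod_S, <- IHn.
  rewrite (rsum_ext (2 ^ n) _ (fun j => g n false * rprod n (fun k => g k (bit j k)))).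
  2:{ intros j Hj. rewrite rprod_S, (bit_high j n n); auto. ring. }
  rewrite (rsum_ext (2 ^ n) (fun j => rprod (S n) _)
             (fun j => g n true * rprod n (fun k => g k (bit j k)))).
  2:{ intros j Hj. rewrite rprod_S, bit_shift, Nat.eqb_refl by auto. simpl.
      rewrite Rmult_comm. f_equal. apply rprod_ext; intros k Hk.
      rewrite bit_shift by auto. destruct (Nat.eqb_spec k n); [lia|reflexivity]. }
  rewrite !rsum_scal. ring.
Qed.

(** * The energy as a sum of one-qubit quadratic forms *)

Definition agree_off (n k a b : nat) : R :=
  rprod n (fun l => if (l =? k)%nat then 1
                    else if Bool.eqb (bit a l) (bit b l) then 1 else 0).

Lemma op_on_agree (n k : nat) (A : bool -> bool -> R) (a b : nat) :
  op_on n k A a b = A (bit a k) (bit b k) * agree_off n k a b.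
Proof. reflexivity. Qed.

Lemma agree_off_set_l (n k i b : nat) : bit i k = false ->
  agree_off n k (i + 2 ^ k) b = agree_off n k i b.
Proof.
  intros H. apply rprod_ext; intros l _. rewrite bit_add_pow by exact H.
  destruct (Nat.eqb_spec l k); reflexivity.
Qed.

Lemma agree_off_set_r (n k i b : nat) : bit i k = false ->
  agree_off n k b (i + 2 ^ k) = agree_off n k b i.
Proof.
  intros H. apply rprod_ext; intros l _. rewrite bit_add_pow by exact H.
  destruct (Nat.eqb_spec l k); reflexivity.
Qed.

Lemma agree_off_delta (n k i j : nat) : (i < 2 ^ n)%nat -> (j < 2 ^ n)%nat ->
  bit i k = false -> bit j k = false ->
  agree_off n k i j = if (j =? i)%nat then 1 else 0.
Proof.
  intros Hi Hj Bi Bj. destruct (Nat.eqb_spec j i) as [->|Hne].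
  - unfold agree_off. rewrite (rprod_ext _ _ (fun _ => 1)), rprod_const, pow1; [reflexivity|].
    intros l _. rewrite eqb_reflx. destruct (l =? k)%nat; reflexivity.
  - destruct (bits_differ i j n Hi Hj (not_eq_sym Hne)) as [l [Hl Hd]].
    apply (rprod_zero _ l _ Hl). destruct (Nat.eqb_spec l k) as [->|Hlk].
    + congruence.
    + destruct (bit i l), (bit j l); simpl; congruence.
Qed.

Lemma op_on_row (n k : nat) (A : bool -> bool -> R) (a i : nat) (x : nat -> R) :
  (k < n)%nat -> (i < 2 ^ n)%nat -> bit i k = false ->
  (forall j, agree_off n k a j = agree_off n k i j) ->
  rsum (2 ^ n) (fun j => op_on n k A a j * x j) =
  A (bit a k) false * x i + A (bit a k) true * x (i + 2 ^ k)%nat.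
Proof.
  intros Hk Hi Bi Ha. rewrite (rsum_pairs n k) by exact Hk.
  rewrite (rsum_ext _ _ (fun j => if (j =? i)%nat then
     A (bit a k) false * x j + A (bit a k) true * x (j + 2 ^ k)%nat else 0)).
  { apply rsum_delta; exact Hi. }
  intros j Hj. destruct (bit j k) eqn:Bj.
  - destruct (Nat.eqb_spec j i) as [->|]; [congruence|reflexivity].
  - rewrite !op_on_agree, !Ha, agree_off_set_r, bit_add_pow, Nat.eqb_refl, Bj by exact Bj.
    rewrite (agree_off_delta n k i j Hi Hj Bi Bj).
    destruct (Nat.eqb_spec j i); simpl; ring.
Qed.

Definition hq (s : R) (a b : bool) : R := (1 - s) * Defs.Pminus a b + s * Defs.P1 a b.

Lemma Ham_local (n : nat) (s : R) (i j : nat) :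
  Ham n s i j = rsum n (fun k => op_on n k (hq s) i j).
Proof.
  unfold Ham. rewrite <- !rsum_scal, <- rsum_plus.
  apply rsum_ext; intros. unfold op_on, hq. ring.
Qed.

Definition quad (n : nat) (H : nat -> nat -> R) (x : nat -> R) : R :=
  rsum (2 ^ n) (fun i => rsum (2 ^ n) (fun j => H i j * (x i * x j))).

Lemma energy_quad (n : nat) (H : nat -> nat -> R) (re im : nat -> R) :
  energy n H re im = quad n H re + quad n H im.
Proof.
  unfold energy, quad. rewrite <- rsum_plus. apply rsum_ext; intros.
  rewrite <- rsum_plus. apply rsum_ext; intros. ring.
Qed.

Definition qubit_form (s u w : R) : R :=
  hq s false false * (u * u) + hq s false true * (u * w) +
  hq s true false * (w * u) + hq s true true * (w * w).

Lemma quad_Ham_local (n : nat) (s : R) (x : nat -> R) :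
  quad n (Ham n s) x = rsum n (fun k => rsum (2 ^ n) (fun i =>
     if bit i k then 0 else qubit_form s (x i) (x (i + 2 ^ k)%nat))).
Proof.
  unfold quad.
  rewrite (rsum_ext _ _ (fun i => rsum n (fun k =>
      x i * rsum (2 ^ n) (fun j => op_on n k (hq s) i j * x j)))).
  2:{ intros i _. rewrite (rsum_ext _ _ (fun j => rsum n (fun k =>
          x i * (op_on n k (hq s) i j * x j)))).
      - rewrite rsum_swap. apply rsum_ext; intros k _. apply rsum_scal.
      - intros j _. rewrite Ham_local, Rmult_comm, <- rsum_scal.
        apply rsum_ext; intros; ring. }
  rewrite rsum_swap. apply rsum_ext; intros k Hk.
  rewrite (rsum_pairs n k) by exact Hk. apply rsum_ext; intros i Hi.
  destruct (bit i k) eqn:Bi; [reflexivity|].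
  rewrite (op_on_row n k _ i i) by auto.
  rewrite (op_on_row n k _ (i + 2 ^ k)%nat i) by (auto; intros; apply agree_off_set_l; auto).
  rewrite bit_add_pow, Nat.eqb_refl, Bi by exact Bi.
  unfold qubit_form. simpl. ring.
Qed.

(** * Diagonalising the one-qubit block *)

(* h_s has eigenvalues (1 -+ rad s)/2; lam is the lower one, and the form
   minus lam*|v|^2 is kap*(w - ratio*u)^2 with ratio = tan(phi_s). *)
Definition rad (s : R) : R := sqrt (s ^ 2 + (1 - s) ^ 2).
Definition lam (s : R) : R := (1 - rad s) / 2.
Definition kap (s : R) : R := (s + rad s) / 2.
Definition ratio (s : R) : R := ((1 - s) / 2) / kap s.

Lemma rad_sq (s : R) : rad s ^ 2 = s ^ 2 + (1 - s) ^ 2.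
Proof. unfold rad. rewrite pow2_sqrt; [reflexivity|nra]. Qed.

Lemma rad_pos (s : R) : 0 < rad s.
Proof. unfold rad. apply sqrt_lt_R0. nra. Qed.

Lemma kap_pos (s : R) : 0 <= s -> 0 < kap s.
Proof. intros. unfold kap. pose proof (rad_pos s). lra. Qed.

Lemma ratio_bounds (s : R) : 0 <= s <= 1 -> 0 <= ratio s <= 1.
Proof.
  intros Hs. pose proof (kap_pos s (proj1 Hs)). pose proof (rad_sq s). pose proof (rad_pos s).
  unfold ratio. split.
  - apply Rmult_le_pos; [lra|left; apply Rinv_0_lt_compat; lra].
  - apply Rmult_le_reg_r with (kap s); auto. unfold Rdiv. rewrite Rmult_assoc, Rinv_l by lra.
    unfold kap. nra.
Qed.

Lemma qubit_form_decomp (s u w : R) : 0 <= s ->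
  qubit_form s u w = lam s * (u * u + w * w) + kap s * (w - ratio s * u) ^ 2.
Proof.
  intros Hs. pose proof (kap_pos s Hs). pose proof (rad_sq s) as HR.
  unfold qubit_form, hq, Defs.Pminus, Defs.P1, ratio, lam. simpl.
  unfold kap in *. field_simplify; [|lra].
  replace (u ^ 2 * rad s ^ 2) with (u ^ 2 * (s ^ 2 + (1 - s) ^ 2)) by (rewrite HR; ring).
  field. lra.
Qed.

(** * Ground states are geometric in the Hamming weight *)

Definition nrm (n : nat) (x : nat -> R) : R := rsum (2 ^ n) (fun i => x i ^ 2).

Lemma norm2_split (n : nat) (re im : nat -> R) : norm2 n re im = nrm n re + nrm n im.
Proof. apply rsum_plus. Qed.

Definition defect (n : nat) (r : R) (k : nat) (x : nat -> R) : R :=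
  rsum (2 ^ n) (fun i => if bit i k then 0 else (x (i + 2 ^ k)%nat - r * x i) ^ 2).

Lemma defect_nonneg (n : nat) (r : R) (k : nat) (x : nat -> R) : 0 <= defect n r k x.
Proof. apply rsum_nonneg; intros. destruct (bit i k); [lra|apply pow2_ge_0]. Qed.

Lemma energy_decomp (n : nat) (s : R) (re im : nat -> R) : 0 <= s ->
  energy n (Ham n s) re im = INR n * lam s * norm2 n re im +
    kap s * rsum n (fun k => defect n (ratio s) k re + defect n (ratio s) k im).
Proof.
  intros Hs.
  assert (Hquad : forall x, quad n (Ham n s) x =
            INR n * lam s * nrm n x + kap s * rsum n (fun k => defect n (ratio s) k x)).
  { intros x. rewrite quad_Ham_local.
    rewrite (rsum_ext _ _ (fun k => lam s * nrm n x + kap s * defect n (ratio s) k x)).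
    { rewrite rsum_plus, rsum_scal, rsum_const, rsum_scal. ring. }
    intros k Hk. unfold nrm, defect. rewrite (rsum_pairs n k (fun i => x i ^ 2)) by exact Hk.
    rewrite <- !rsum_scal, <- rsum_plus. apply rsum_ext; intros i _.
    destruct (bit i k); [ring|]. rewrite qubit_form_decomp by exact Hs. ring. }
  rewrite energy_quad, !Hquad, norm2_split, rsum_plus. ring.
Qed.

(* Amplitudes proportional to r^{h(j)}: the product state (|0> + r|1>)^n. *)
Definition geometric (n : nat) (r : R) (x : nat -> R) : Prop :=
  forall j, (j < 2 ^ n)%nat -> x j = r ^ hw n j * x 0%nat.

Lemma geometric_defect (n : nat) (r : R) (k : nat) (x : nat -> R) :
  (k < n)%nat -> geometric n r x -> defect n r k x = 0.
Proof.
  intros Hk Hx. unfold defect. transitivity (rsum (2 ^ n) (fun _ => 0)); [|apply rsum_zero].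
  apply rsum_ext; intros i Hi.
  destruct (bit i k) eqn:Bi; [reflexivity|].
  rewrite (Hx (i + 2 ^ k)%nat), (Hx i), hw_set_bit by (auto using set_bit_lt).
  simpl. ring.
Qed.

Lemma recurrence_geometric (n : nat) (r : R) (x : nat -> R) :
  (forall k i, (k < n)%nat -> (i < 2 ^ n)%nat -> bit i k = false ->
     x (i + 2 ^ k)%nat = r * x i) ->
  geometric n r x.
Proof.
  intros Hrec.
  assert (Hm : forall m, (m <= n)%nat -> forall j, (j < 2 ^ m)%nat ->
                 x j = r ^ hw n j * x 0%nat).
  { induction m as [|m IH]; intros Hm j Hj.
    - simpl in Hj. replace j with 0%nat by lia. rewrite hw_zero. simpl. ring.
    - destruct (Nat.lt_ge_cases j (2 ^ m)) as [Hlt|Hge]; [apply IH; auto; lia|].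
      assert (Hmn : (2 ^ m <= 2 ^ n)%nat) by (apply Nat.pow_le_mono_r; lia).
      assert (Hlow : (j - 2 ^ m < 2 ^ m)%nat) by (simpl in Hj; lia).
      assert (Hbit : bit (j - 2 ^ m) m = false) by (apply (bit_high _ m m); auto).
      replace j with ((j - 2 ^ m) + 2 ^ m)%nat by lia.
      rewrite Hrec, hw_set_bit, IH by (auto; lia). simpl. ring. }
  intros j Hj. apply (Hm n); auto.
Qed.

Lemma defect_zero_recurrence (n : nat) (r : R) (k : nat) (x : nat -> R) :
  defect n r k x <= 0 ->
  forall i, (i < 2 ^ n)%nat -> bit i k = false -> x (i + 2 ^ k)%nat = r * x i.
Proof.
  intros H i Hi Bi.
  pose proof (rsum_term_le (2 ^ n)
    (fun i => if bit i k then 0 else (x (i + 2 ^ k)%nat - r * x i) ^ 2) i) as Hterm.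
  simpl in Hterm. rewrite Bi in Hterm.
  assert ((x (i + 2 ^ k)%nat - r * x i) ^ 2 <= 0).
  { eapply Rle_trans; [apply Hterm|exact H]; auto.
    intros j _. destruct (bit j k); [lra|apply pow2_ge_0]. }
  nra.
Qed.

Lemma nrm_geometric (n : nat) (r : R) (x : nat -> R) :
  geometric n r x -> nrm n x = x 0%nat ^ 2 * (1 + r ^ 2) ^ n.
Proof.
  intros Hx. unfold nrm.
  rewrite (rsum_ext _ _ (fun j => x 0%nat ^ 2 *
             rprod n (fun k => if bit j k then r ^ 2 else 1))).
  - rewrite rsum_scal, (rsum_rprod n (fun _ b => if b then r ^ 2 else 1)), rprod_const.
    reflexivity.
  - intros j Hj. rewrite Hx, <- pow_hw, Rpow_mult_distr, <- pow_mult, Nat.mul_comm, pow_mult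
      by exact Hj.
    ring.
Qed.

(* A ground state of H^n_s has zero defect, since the normalised geometric
   vector with ratio tan(phi_s) reaches the lower bound n*lam of the energy. *)
Lemma ground_state_geometric (n : nat) (s : R) (re im : nat -> R) :
  0 <= s <= 1 -> IsGroundState n (Ham n s) re im ->
  geometric n (ratio s) re /\ geometric n (ratio s) im.
Proof.
  intros Hs [Hnorm Hmin]. set (r := ratio s).
  set (c := (1 + r ^ 2) ^ n).
  assert (Hc : 0 < c) by (apply pow_lt; nra).
  set (y := fun j => r ^ hw n j / sqrt c).
  assert (Hy : geometric n r y).
  { intros j _. unfold y. rewrite hw_zero. simpl. field. apply Rgt_not_eq, sqrt_lt_R0, Hc. }
  assert (Hzero : geometric n r (fun _ => 0)) by (intros j _; ring).
  assert (Hynorm : norm2 n y (fun _ => 0) = 1).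
  { rewrite norm2_split, (nrm_geometric _ _ _ Hy), (nrm_geometric _ _ _ Hzero).
    assert (Hsq : sqrt c ^ 2 = c) by (apply pow2_sqrt; lra).
    unfold y. rewrite hw_zero, pow_O. fold c.
    replace ((1 / sqrt c) ^ 2) with (/ c)
      by (unfold Rdiv; rewrite Rpow_mult_distr, pow_inv, Hsq; ring).
    field. lra. }
  specialize (Hmin _ _ Hynorm). rewrite !energy_decomp, Hnorm, Hynorm in Hmin by lra.
  rewrite (rsum_ext n (fun k => defect n (ratio s) k y + _) (fun _ => 0)), rsum_zero in Hmin.
  2:{ intros k Hk. rewrite !geometric_defect by auto. ring. }
  fold r in Hmin. set (f := fun k => defect n r k re + defect n r k im) in Hmin.
  assert (Hf : forall k, (k < n)%nat -> 0 <= f k).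
  { intros k _. unfold f. pose proof (defect_nonneg n r k re). pose proof (defect_nonneg n r k im). lra. }
  assert (Htot : rsum n f <= 0).
  { apply (Rmult_le_reg_l (kap s)); [apply kap_pos; lra|]. lra. }
  assert (Hk : forall k, (k < n)%nat -> defect n r k re <= 0 /\ defect n r k im <= 0).
  { intros k Hk. pose proof (rsum_term_le n f k Hf Hk). unfold f in *.
    pose proof (defect_nonneg n r k re). pose proof (defect_nonneg n r k im). lra. }
  split; apply recurrence_geometric; intros k i Hk' Hi Bi;
    apply (defect_zero_recurrence n r k); auto; apply Hk; auto.
Qed.

(** * Both amplitude distributions are product Bernoulli weights *)

Definition bernoulli_weight (n : nat) (p : R) (j : nat) : R :=
  rprod n (fun k => if bit j k then p else 1 - p).

Lemma bernoulli_weight_nonneg (n : nat) (p : R) (j : nat) :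
  0 <= p <= 1 -> 0 <= bernoulli_weight n p j.
Proof. intros. apply rprod_nonneg; intros. destruct (bit j i); lra. Qed.

Lemma hadamard_geometric (n j : nat) (r : R) (x : nat -> R) :
  geometric n r x ->
  rsum (2 ^ n) (fun i => hadn n j i * x i) =
  x 0%nat * rprod n (fun k => (1 + (if bit j k then -1 else 1) * r) / sqrt 2).
Proof.
  intros Hx.
  set (g := fun (k : nat) (b : bool) =>
              (if bit j k && b then -1 else 1) / sqrt 2 * (if b then r else 1)).
  rewrite (rsum_ext _ _ (fun i => x 0%nat * rprod n (fun k => g k (bit i k)))).
  2:{ intros i Hi. rewrite (Hx i Hi), pow_hw. unfold hadn, g. rewrite rprod_mult. ring. }
  rewrite rsum_scal, rsum_rprod. f_equal. apply rprod_ext; intros k _.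
  assert (sqrt 2 <> 0) by (apply Rgt_not_eq, sqrt_lt_R0; lra).
  unfold g. destruct (bit j k); simpl; field; assumption.
Qed.

Section GeometricAmplitudes.

Variables (n : nat) (r : R) (re im : nat -> R).
Hypothesis (Hre : geometric n r re) (Him : geometric n r im).
Hypothesis Hnorm : (re 0%nat ^ 2 + im 0%nat ^ 2) * (1 + r ^ 2) ^ n = 1.

Lemma amp0_as_product : re 0%nat ^ 2 + im 0%nat ^ 2 = rprod n (fun _ => / (1 + r ^ 2)).
Proof.
  assert (0 < 1 + r ^ 2) by nra. rewrite rprod_const, pow_inv.
  apply (Rmult_eq_reg_r ((1 + r ^ 2) ^ n)); [|apply pow_nonzero; lra].
  rewrite Hnorm, Rinv_l; [reflexivity|apply pow_nonzero; lra].
Qed.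

Lemma comp_weight (j : nat) : (j < 2 ^ n)%nat ->
  amp2_comp re im j = bernoulli_weight n (r ^ 2 / (1 + r ^ 2)) j.
Proof.
  intros Hj. assert (0 < 1 + r ^ 2) by nra. unfold amp2_comp. rewrite (Hre j Hj), (Him j Hj).
  replace ((r ^ hw n j * re 0%nat) ^ 2 + (r ^ hw n j * im 0%nat) ^ 2)
    with ((r ^ 2) ^ hw n j * (re 0%nat ^ 2 + im 0%nat ^ 2))
    by (rewrite <- pow_mult, Nat.mul_comm, pow_mult; ring).
  rewrite pow_hw, amp0_as_product, <- rprod_mult. apply rprod_ext; intros k _.
  destruct (bit j k); field; lra.
Qed.

Lemma had_weight (j : nat) : (j < 2 ^ n)%nat ->
  amp2_had n re im j = bernoulli_weight n ((1 - r) ^ 2 / (2 * (1 + r ^ 2))) j.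
Proof.
  intros Hj. assert (0 < 1 + r ^ 2) by nra. unfold amp2_had.
  rewrite (hadamard_geometric n j r re Hre), (hadamard_geometric n j r im Him).
  set (P := rprod n (fun k => (1 + (if bit j k then -1 else 1) * r) / sqrt 2)).
  replace ((re 0%nat * P) ^ 2 + (im 0%nat * P) ^ 2)
    with ((re 0%nat ^ 2 + im 0%nat ^ 2) * P ^ 2) by ring.
  unfold P. rewrite rprod_sq, amp0_as_product, <- rprod_mult. apply rprod_ext; intros k _.
  assert (H2 : sqrt 2 ^ 2 = 2) by (apply pow2_sqrt; lra).
  assert (sqrt 2 <> 0) by (apply Rgt_not_eq, sqrt_lt_R0; lra).
  unfold Rdiv. rewrite Rpow_mult_distr, pow_inv, H2.
  destruct (bit j k); field; lra.
Qed.

End GeometricAmplitudes.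

Lemma amplitude_params_le_half (r : R) : 0 <= r <= 1 ->
  0 <= r ^ 2 / (1 + r ^ 2) <= 1/2 /\ 0 <= (1 - r) ^ 2 / (2 * (1 + r ^ 2)) <= 1/2.
Proof.
  intros Hr. assert (Hc : 0 < 1 + r ^ 2) by nra.
  split; split; try (apply Rmult_le_pos; [nra|left; apply Rinv_0_lt_compat; nra]).
  - apply (Rmult_le_reg_r (1 + r ^ 2)); [assumption|]. field_simplify; nra.
  - apply (Rmult_le_reg_r (2 * (1 + r ^ 2))); [nra|]. field_simplify; nra.
Qed.

(** * The upper tail of a Binomial(n, p) with p <= 1/2 *)

Definition tail (n : nat) (theta : R) (f : nat -> R) : R :=
  rsum (2 ^ n) (fun j => if Rle_dec theta (INR (hw n j)) then f j else 0).

Lemma exp_INR_mult (m : nat) (y : R) : exp (INR m * y) = exp y ^ m.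
Proof.
  induction m; [simpl; rewrite Rmult_0_l, exp_0; reflexivity|].
  rewrite S_INR, Rmult_plus_distr_r, Rmult_1_l, exp_plus, IHm. simpl. ring.
Qed.

(* Chernoff's bound: 1[h >= theta] <= e^{t(h - theta)} for t >= 0, and the
   moment generating function of the Bernoulli weights factorizes. *)
Lemma chernoff (n : nat) (p theta t : R) : 0 <= p <= 1 -> 0 <= t ->
  tail n theta (bernoulli_weight n p) <= exp (- (t * theta)) * (1 - p + p * exp t) ^ n.
Proof.
  intros Hp Ht. unfold tail.
  apply Rle_trans with (rsum (2 ^ n) (fun j => exp (- (t * theta)) *
      rprod n (fun k => if bit j k then p * exp t else 1 - p))).
  - apply rsum_le; intros j _.
    assert (Hmgf : exp (- (t * theta)) * rprod n (fun k => if bit j k then p * exp t else 1 - p)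
                   = bernoulli_weight n p j * exp (t * (INR (hw n j) - theta))).
    { replace (t * (INR (hw n j) - theta)) with (INR (hw n j) * t + - (t * theta)) by ring.
      rewrite exp_plus, exp_INR_mult, pow_hw. unfold bernoulli_weight.
      rewrite <- Rmult_assoc, <- rprod_mult, Rmult_comm.
      f_equal. apply rprod_ext; intros k _. destruct (bit j k); ring. }
    rewrite Hmgf. pose proof (bernoulli_weight_nonneg n p j Hp).
    destruct (Rle_dec _ _) as [Hge|_].
    + rewrite <- (Rmult_1_r (bernoulli_weight n p j)) at 1. apply Rmult_le_compat_l; auto.
      pose proof (exp_ineq1_le (t * (INR (hw n j) - theta))).
      assert (0 <= t * (INR (hw n j) - theta)) by (apply Rmult_le_pos; lra). lra.
    + apply Rmult_le_pos; [assumption|left; apply exp_pos].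
  - rewrite rsum_scal, (rsum_rprod n (fun _ b => if b then p * exp t else 1 - p)), rprod_const.
    right. reflexivity.
Qed.

(* cosh u <= exp(4u^2/3) on [0, 1/2], via e^u <= 1/(1-u) and e^-u <= 1/(1+u). *)
Lemma cosh_bound (u : R) : 0 <= u <= 1/2 ->
  (exp u + exp (- u)) / 2 <= exp (4 * u ^ 2 / 3).
Proof.
  intros Hu.
  assert (Ha : exp u <= / (1 - u)).
  { pose proof (exp_ineq1_le (- u)). pose proof (exp_pos u).
    apply (Rmult_le_reg_r (1 - u)); [lra|]. rewrite Rinv_l by lra.
    replace 1 with (exp u * exp (- u)) at 2
      by (rewrite <- exp_plus, Rplus_opp_r, exp_0; reflexivity).
    apply Rmult_le_compat_l; lra. }
  assert (Hb : exp (- u) <= / (1 + u)).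
  { pose proof (exp_ineq1_le u). pose proof (exp_pos (- u)).
    apply (Rmult_le_reg_r (1 + u)); [lra|]. rewrite Rinv_l by lra.
    replace 1 with (exp (- u) * exp u) at 2
      by (rewrite <- exp_plus, Rplus_opp_l, exp_0; reflexivity).
    apply Rmult_le_compat_l; lra. }
  assert (Hsum : / (1 - u) + / (1 + u) <= 2 + 8 * u ^ 2 / 3).
  { replace (/ (1 - u) + / (1 + u)) with (2 / (1 - u ^ 2)) by (field; repeat split; nra).
    apply (Rmult_le_reg_r (1 - u ^ 2)); [nra|].
    unfold Rdiv. rewrite Rmult_assoc, Rinv_l by nra.
    assert (0 <= u ^ 2 <= 1/4) by nra.
    pose proof (Rmult_le_pos (u ^ 2) (1/4 - u ^ 2) ltac:(lra) ltac:(lra)). nra. }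
  pose proof (exp_ineq1_le (4 * u ^ 2 / 3)). lra.
Qed.

(* With t = 2u and theta = n(1/2 + u), the per-qubit Chernoff factor for
   p = 1/2 is at most exp(-2u^2/3). *)
Lemma chernoff_factor (u : R) : 0 <= u <= 1/2 ->
  exp (- (2 * u) * (u + 1/2)) * ((1 + exp (2 * u)) / 2) <= exp (- (2 * u ^ 2 / 3)).
Proof.
  intros Hu.
  assert (Hinv : exp u * exp (- u) = 1)
    by (rewrite <- exp_plus, Rplus_opp_r, exp_0; reflexivity).
  assert (Hl : exp (- (2 * u) * (u + 1/2)) = exp (- (2 * u ^ 2)) * exp (- u))
    by (rewrite <- exp_plus; f_equal; field).
  assert (Hsq : exp (2 * u) = exp u * exp u) by (rewrite <- exp_plus; f_equal; ring).
  assert (Hr : exp (- (2 * u ^ 2 / 3)) = exp (- (2 * u ^ 2)) * exp (4 * u ^ 2 / 3))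
    by (rewrite <- exp_plus; f_equal; field).
  rewrite Hl, Hsq, Hr.
  replace (exp (- (2 * u ^ 2)) * exp (- u) * ((1 + exp u * exp u) / 2))
    with (exp (- (2 * u ^ 2)) * ((exp u + exp (- u)) / 2))
    by (replace (exp u + exp (- u)) with (exp (- u) + exp u * (exp u * exp (- u)))
          by (rewrite Hinv; ring); field).
  apply Rmult_le_compat_l; [left; apply exp_pos|]. apply cosh_bound, Hu.
Qed.

(* The Hoeffding-type bound of the theorem, for each Bernoulli law with
   p <= 1/2, via t = 2(theta - n/2)/n in the Chernoff bound. *)
Lemma tail_bound (n : nat) (p theta : R) : 0 <= p <= 1/2 -> INR n / 2 <= theta ->
  tail n theta (bernoulli_weight n p) <= exp (- (2 * (theta - INR n / 2) ^ 2) / (3 * INR n)).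
Proof.
  intros Hp Hth. unfold tail.
  destruct (Nat.eq_dec n 0) as [->|Hn0].
  - (* no qubits: the exponent is 0 by the convention x/0 = 0 *)
    simpl INR. replace (3 * 0) with 0 by ring. unfold Rdiv. rewrite Rinv_0, Rmult_0_r, exp_0.
    simpl. rewrite rsum_S. cbn. destruct (Rle_dec _ _); lra.
  - assert (HN : 0 < INR n) by (apply lt_0_INR; lia).
    destruct (Rlt_dec (INR n) theta) as [Hgt|Hle].
    +
      rewrite (rsum_ext _ _ (fun _ => 0)), rsum_zero; [left; apply exp_pos|].
      intros j _. destruct (Rle_dec _ _); [|reflexivity].
      pose proof (le_INR _ _ (hw_le n j)). lra.
    + set (u := (theta - INR n / 2) / INR n).
      assert (Hu : 0 <= u <= 1/2).
      { unfold u. split.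
        - apply Rmult_le_pos; [lra|left; apply Rinv_0_lt_compat; lra].
        - apply (Rmult_le_reg_r (INR n)); auto. unfold Rdiv.
          rewrite Rmult_assoc, Rinv_l by lra. lra. }
      eapply Rle_trans; [apply (chernoff n p theta (2 * u)); lra|].
      assert (Het : 1 <= exp (2 * u)) by (pose proof (exp_ineq1_le (2 * u)); lra).
      apply Rle_trans with (exp (- (2 * u * theta)) * ((1 + exp (2 * u)) / 2) ^ n).
      { apply Rmult_le_compat_l; [left; apply exp_pos|]. apply pow_incr. nra. }
      replace (- (2 * u * theta)) with (INR n * (- (2 * u) * (u + 1/2)))
        by (unfold u; field; lra).
      replace (- (2 * (theta - INR n / 2) ^ 2) / (3 * INR n))
        with (INR n * (- (2 * u ^ 2 / 3))) by (unfold u; field; lra).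
      rewrite !exp_INR_mult, <- Rpow_mult_distr. apply pow_incr. split.
      * apply Rmult_le_pos; [left; apply exp_pos|]. pose proof (exp_pos (2 * u)). lra.
      * apply chernoff_factor, Hu.
Qed.

Theorem mainTheorem14 (n : nat) (theta s : R) (re im : nat -> R) :
  INR n / 2 <= theta ->
  0 <= s <= 1 ->
  IsGroundState n (Ham n s) re im ->
  rsum (2 ^ n) (fun j =>
    if Rle_dec theta (INR (hw n j))
    then amp2_comp re im j + amp2_had n re im j
    else 0)
  <= 2 * exp (- (2 * (theta - INR n / 2) ^ 2) / (3 * INR n)).
Proof.
  intros Hth Hs HG.
  destruct (ground_state_geometric n s re im Hs HG) as [Hre Him].
  pose proof (ratio_bounds s Hs) as Hr. set (r := ratio s) in *.
  assert (Hnorm : (re 0%nat ^ 2 + im 0%nat ^ 2) * (1 + r ^ 2) ^ n = 1).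
  { destruct HG as [HG _]. transitivity (norm2 n re im); [|exact HG].
    rewrite norm2_split, (nrm_geometric _ _ _ Hre), (nrm_geometric _ _ _ Him). ring. }
  destruct (amplitude_params_le_half r Hr) as [Hp Hq].
  (* each amplitude sum is the upper tail of a product Bernoulli law *)
  change (tail n theta (fun j => amp2_comp re im j + amp2_had n re im j) <=
          2 * exp (- (2 * (theta - INR n / 2) ^ 2) / (3 * INR n))).
  replace (tail n theta (fun j => amp2_comp re im j + amp2_had n re im j))
    with (tail n theta (bernoulli_weight n (r ^ 2 / (1 + r ^ 2))) +
          tail n theta (bernoulli_weight n ((1 - r) ^ 2 / (2 * (1 + r ^ 2))))).
  - pose proof (tail_bound _ _ theta Hp Hth). pose proof (tail_bound _ _ theta Hq Hth). lra.
  - unfold tail. rewrite <- rsum_plus. apply rsum_ext; intros j Hj.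
    rewrite (comp_weight n r re im Hre Him Hnorm j Hj), (had_weight n r re im Hre Him Hnorm j Hj).
    destruct (Rle_dec _ _); ring.
Qed.
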